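(* Let $G$ be a simple stochastic game, let $A$ be a subset of the arcs of $G$, and let $\sigma$ be a positional $\text{MAX}$ strategy. Then $K^{G}_{\sigma} = K^{G[A,\sigma]}_{\sigma}$, i.e. a vertex $x$ of $G$ satisfies $v^G_\sigma(x)=0$ if and only if $v^{G[A,\sigma]}_\sigma(x)=0$.
   Context: A simple stochastic game (SSG) $G$ is a finite directed graph whose vertex set $V$ is partitioned into $V_{\max}$ (MAX vertices), $V_{\min}$ (MIN vertices), $V_R$ (random vertices) and a nonempty set $V_S$ (sinks); every vertex of $V_{\max}\cup V_{\min}\cup V_R$ has at least one outgoing arc, every sink has exactly one outgoing arc, which is a self-loop; each random vertex $x$ carries a probability distribution $p_x$ with rational values on its out-neighbourhood $N^+(x)$, with $p_x(y)>0$ for all $y\in N^+(x)$; each sink $s$ has a rational value $\mathrm{Val}(s)\in[0,1]$. A positional MAX (resp. MIN) strategy is a map $\sigma$ (resp. $\tau$) assigning to each MAX (resp. MIN) vertex one of its out-neighbours. Given $\sigma,\tau$ and a start vertex $x_0$, the random play $X_0=x_0,X_1,\dots$ is defined by $X_{t+1}=\sigma(X_t)$ if $X_t\in V_{\max}$, $X_{t+1}=\tau(X_t)$ if $X_t\in V_{\min}$, $X_{t+1}$ drawn according to $p_{X_t}$ independently of everything else if $X_t\in V_R$, and $X_{t+1}=X_t$ if $X_t\in V_S$. The value of the play is $\mathrm{Val}(s)$ if the play reaches a sink $s$ and $0$ if it never reaches a sink; $v^G_{\sigma,\tau}(x_0)$ is its expectation. A best response to $\sigma$ is a positional MIN strategy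 $\tau$ with $v_{\sigma,\tau}\le v_{\sigma,\tau'}$ pointwise for all MIN strategies $\tau'$; positional best responses exist, and $v^G_\sigma:=v^G_{\sigma,\tau}$ for any best response $\tau$. $K^G_\sigma$ denotes the set of vertices $x$ with $v^G_\sigma(x)=0$. Transformed game: for a set $A$ of arcs of $G$ and $f:A\to\mathbb{Q}$, $G[A,f]$ is the SSG obtained from a copy of $G$ by replacing each arc $e=(x,y)\in A$ by an arc $(x,s_e)$, where $s_e$ is a new sink with value $f(e)$ (if $x$ is random, $p_x(s_e)=p_x(y)$); the vertex $y$ is kept. $G[A,\sigma]$ denotes $G[A,f]$ with $f((x,y))=v^G_\sigma(y)$. Strategies of $G$ and $G[A,\sigma]$ are identified (a MAX vertex $x$ with $\sigma(x)=y$, $(x,y)\in A$, moves to $s_{(x,y)}$ in $G[A,\sigma]$), and value vectors are compared only on the vertices of $G$. *)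

From HB Require Import structures.
From mathcomp Require Import all_boot all_order all_algebra.
From mathcomp Require Import all_classical all_reals all_analysis.
Set Implicit Arguments. Unset Strict Implicit. Unset Printing Implicit Defensive.
Import Order.TTheory GRing.Theory Num.Theory.
Local Open Scope ring_scope.

Inductive vkind := VMax | VMin | VRand | VSink.
Definition is_sink_kind (k : vkind) : bool := if k is VSink then true else false.

Record ssg (R : realType) (V : finType) := SSG {
  gkind : V -> vkind;
  garc : rel V;
  gprob : V -> V -> R;       (* p_x(y) for random x (0 outside N^+(x)) *)
  gsval : V -> R
}.

Definition is_rational (R : realType) (r : R) := exists q : rat, r = ratr q.

Definition is_ssg (R : realType) (V : finType) (G : ssg R V) : Prop :=
  [/\ (exists s, gkind G s = VSink),
      (forall x, gkind G x <> VSink -> exists y, garc G x y),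
      (forall s y, gkind G s = VSink -> (garc G s y <-> y = s)),
      (forall x, gkind G x = VRand ->
         [/\ (forall y, garc G x y -> 0 < gprob G x y),
             (forall y, ~~ garc G x y -> gprob G x y = 0),
             \sum_(y | garc G x y) gprob G x y = 1
           & (forall y, is_rational (gprob G x y))])
    & (forall s, gkind G s = VSink ->
         [/\ 0 <= gsval G s, gsval G s <= 1 & is_rational (gsval G s)])].

Definition is_max_strategy R V (G : ssg R V) (sigma : V -> V) :=
  forall x, gkind G x = VMax -> garc G x (sigma x).
Definition is_min_strategy R V (G : ssg R V) (tau : V -> V) :=
  forall x, gkind G x = VMin -> garc G x (tau x).

Definition trans R V (G : ssg R V) (sigma tau : V -> V) (x y : V) : R :=
  match gkind G x with
  | VMax => (sigma x == y)%:R
  | VMin => (tau x == y)%:R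
  | VRand => gprob G x y
  | VSink => (x == y)%:R
  end.

Fixpoint dist R V (G : ssg R V) (sigma tau : V -> V) (x0 : V) (n : nat) : V -> R :=
  match n with
  | 0 => fun y => (x0 == y)%:R
  | n.+1 => fun y => \sum_(x : V) dist G sigma tau x0 n x * trans G sigma tau x y
  end.

(* v_{sigma,tau}(x0): expected gvalue of the play.  Since sinks are absorbing,
   the probability that the play reaches sink s equals lim_n P(X_n = s), and
   plays that never reach a sink contribute 0. *)
Definition gvalue R V (G : ssg R V) (sigma tau : V -> V) (x0 : V) : R :=
  limn (fun n => \sum_(s : V | is_sink_kind (gkind G s)) dist G sigma tau x0 n s * gsval G s).

Definition best_response R V (G : ssg R V) (sigma tau : V -> V) : Prop :=
  is_min_strategy G tau /\
  forall tau', is_min_strategy G tau' ->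
    forall x, gvalue G sigma tau x <= gvalue G sigma tau' x.

(* The transformed game G[A,f]: vertices of G plus one new sink s_e per e in A. *)
Definition tvert (V : finType) (A : {set V * V}) : finType :=
  (V + {e : V * V | e \in A})%type.

Definition transform R (V : finType) (G : ssg R V) (A : {set V * V})
    (f : V * V -> R) : ssg R (tvert A) :=
  @SSG R (tvert A)
    (fun u => match u with inl x => gkind G x | inr _ => VSink end)
    (fun u w => match u, w with
       | inl x, inl y => garc G x y && ((x, y) \notin A)
       | inl x, inr e => (val e).1 == x
       | inr e, inr e' => e == e'
       | inr _, inl _ => false
       end)
    (fun u w => match u, w with
       | inl x, inl y => if (x, y) \in A then 0 else gprob G x y
       | inl x, inr e => if (val e).1 == x then gprob G x (val e).2 else 0
       | inr _, _ => 0
       end)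
    (fun u => match u with inl x => gsval G x | inr e => f (val e) end).

Definition lift_strategy (V : finType) (A : {set V * V}) (sigma : V -> V)
    (u : tvert A) : tvert A :=
  match u with
  | inl x => match insub (x, sigma x) with
             | Some e => inr e
             | None => inl (sigma x)
             end
  | inr e => inr e
  end.
Arguments lift_strategy {V} A sigma u.
Arguments tvert {V} A.

From HB Require Import structures.
From mathcomp Require Import all_boot all_order all_algebra.
From mathcomp Require Import all_classical all_reals all_analysis.
Import Order.TTheory GRing.Theory Num.Theory.
Local Open Scope ring_scope.
Set Implicit Arguments. Unset Strict Implicit.

(* Once both strategies are fixed the game is a finite Markov chain, and the
   value at x vanishes iff no sink of positive value is reachable from x; so the
   zero-value vertices form the largest set closed under positive-probability
   moves all of whose sinks have value 0.  If v_sigma(x) = 0, then in G[A,sigma]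
   with MIN playing tau, every vertex reachable from x is a vertex of K_sigma or a
   new sink s_e with e.2 in K_sigma, hence of value 0.  Conversely, MIN may play
   tau on K_sigma and copy tau' elsewhere in G: from a zero-value vertex of
   G[A,sigma] the play either stays among such vertices or enters a new sink s_e,
   whose value 0 says that e.2 lies in K_sigma. *)

Definition stochastic_ssg (R : realType) (V : finType) (G : ssg R V) : Prop :=
  [/\ forall x y, gkind G x = VRand -> 0 <= gprob G x y,
      forall x, gkind G x = VRand -> \sum_y gprob G x y = 1
    & forall s, gkind G s = VSink -> 0 <= gsval G s].

Lemma is_ssg_stochastic (R : realType) (V : finType) (G : ssg R V) :
  is_ssg G -> stochastic_ssg G.
Proof.
case=> _ _ _ Hrand Hsink; split=> [x y /Hrand[Hpos Hzero _ _]|x /Hrand[_ Hzero Hsum _]|].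
- by have [/Hpos/ltW|/Hzero->] := boolP (garc G x y).
- by rewrite (bigID (garc G x)) /= Hsum big1 ?addr0 // => y /Hzero.
- by move=> s /Hsink[].
Qed.

Lemma sum_indicator (R : realType) (T : finType) (c : T) :
  \sum_(b : T) ((c == b)%:R : R) = 1.
Proof.
rewrite (bigD1 c) //= eqxx big1 ?addr0 // => b.
by rewrite eq_sym => /negPf->.
Qed.

Lemma indicator_neq0 (R : realType) (T : eqType) (a b : T) :
  ((a == b)%:R : R) != 0 -> a = b.
Proof. by have [|_] := eqVneq a b; last rewrite eqxx. Qed.

Section MarkovChain.
Variables (R : realType) (V : finType) (G : ssg R V).
Hypothesis stochG : stochastic_ssg G.
Variables (sg tu : V -> V).

Local Notation T := (trans G sg tu).
Local Notation D := (dist G sg tu).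
Local Notation sink s := (is_sink_kind (gkind G s)).

Lemma trans_ge0 x y : 0 <= T x y.
Proof. by rewrite /trans; case Hx: (gkind G x) => //; case: stochG => + _ _; apply. Qed.

Lemma trans_sum1 x : \sum_y T x y = 1.
Proof.
rewrite /trans; case Hx: (gkind G x); rewrite ?sum_indicator //.
by case: stochG => _ + _; apply.
Qed.

Lemma gsval_ge0 s : sink s -> 0 <= gsval G s.
Proof. by case: stochG => _ _ Hs; case: (gkind G s) (Hs s) => // + _; apply. Qed.

Lemma trans_sink s : sink s -> T s s = 1.
Proof. by rewrite /trans; case: (gkind G s) => // _; rewrite eqxx. Qed.

Lemma dist_ge0 x n y : 0 <= D x n y.
Proof.
elim: n y => [|n IHn] y /=; first exact: ler0n.
by apply: sumr_ge0 => v _; rewrite mulr_ge0 ?trans_ge0.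
Qed.

Lemma dist_sum1 x n : \sum_y D x n y = 1.
Proof.
elim: n => [|n IHn] /=; first exact: sum_indicator.
rewrite exchange_big /= -[RHS]IHn; apply: eq_bigr => v _.
by rewrite -mulr_sumr trans_sum1 mulr1.
Qed.

Lemma dist_le1 x n y : D x n y <= 1.
Proof.
rewrite -(dist_sum1 x n) (bigD1 y) //= lerDl.
by apply: sumr_ge0 => v _; apply: dist_ge0.
Qed.

Lemma dist_first_step x n y : D x n.+1 y = \sum_w T x w * D w n y.
Proof.
elim: n y => [|n IHn] y.
  rewrite /= (bigD1 x) //= eqxx mul1r big1 => [|v]; last first.
    by rewrite eq_sym => /negPf->; rewrite mul0r.
  rewrite addr0 (bigD1 y) //= eqxx mulr1 big1 ?addr0 // => w.
  by rewrite eq_sym => /negPf->; rewrite mulr0.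
have -> : D x n.+2 y = \sum_v D x n.+1 v * T v y by [].
under eq_bigr do rewrite IHn mulr_suml.
rewrite exchange_big /=; apply: eq_bigr => w _.
by rewrite mulr_sumr; apply: eq_bigr => v _; rewrite mulrA.
Qed.

Definition sink_payoff x n := \sum_(s | sink s) D x n s * gsval G s.

Lemma sink_payoff_ge0 x n : 0 <= sink_payoff x n.
Proof. by apply: sumr_ge0 => s Hs; rewrite mulr_ge0 ?dist_ge0 ?gsval_ge0. Qed.

(* Sinks are absorbing, so the mass sitting on each sink only grows. *)
Lemma sink_payoff_nondecreasing x : {homo sink_payoff x : n m / (n <= m)%N >-> n <= m}.
Proof.
apply: homo_leq => [||n]; [exact: lexx|exact: le_trans|].
apply: ler_sum => s Hs; rewrite ler_wpM2r ?gsval_ge0 //=.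
rewrite (bigD1 s) //= trans_sink // mulr1 lerDl.
by apply: sumr_ge0 => v _; rewrite mulr_ge0 ?dist_ge0 ?trans_ge0.
Qed.

Lemma sink_payoff_cvg x : cvgn (sink_payoff x).
Proof.
apply: nondecreasing_is_cvgn; first exact: sink_payoff_nondecreasing.
exists (\sum_(s | sink s) gsval G s) => _ [n _ <-].
apply: ler_sum => s Hs; rewrite -[leRHS]mul1r ler_wpM2r ?gsval_ge0 //.
exact: dist_le1.
Qed.

Lemma sink_payoff_le_gvalue x n : sink_payoff x n <= gvalue G sg tu x.
Proof.
apply: nondecreasing_cvgn_le; [exact: sink_payoff_nondecreasing|exact: sink_payoff_cvg].
Qed.

Lemma gvalue_ge0 x : 0 <= gvalue G sg tu x.
Proof. exact: le_trans (sink_payoff_ge0 x 0) (sink_payoff_le_gvalue x 0). Qed.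

Definition payoff_null x := forall n s, sink s -> D x n s * gsval G s = 0.

Lemma gvalue_eq0P x : gvalue G sg tu x = 0 <-> payoff_null x.
Proof.
split=> [Hx n s Hs|Hx].
  have : sink_payoff x n = 0.
    by apply/eqP; rewrite eq_le sink_payoff_ge0 -Hx sink_payoff_le_gvalue.
  move/psumr_eq0P; apply=> // v Hv.
  by rewrite mulr_ge0 ?dist_ge0 ?gsval_ge0.
rewrite /gvalue (_ : (fun n => _) = fun=> 0) ?lim_cst //.
by apply: funext => n; rewrite big1 // => s /Hx.
Qed.

Lemma payoff_null_trans x y : payoff_null x -> T x y != 0 -> payoff_null y.
Proof.
move=> Hx Hxy n s Hs.
have term_ge0 v : 0 <= T x v * D v n s * gsval G s.
  by rewrite !mulr_ge0 ?trans_ge0 ?dist_ge0 ?gsval_ge0.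
have := Hx n.+1 s Hs; rewrite dist_first_step mulr_suml.
move=> /(psumr_eq0P (fun v _ => term_ge0 v))/(_ y isT)/eqP.
by rewrite -mulrA mulf_eq0 (negPf Hxy) => /eqP.
Qed.

Lemma payoff_null_sink s : payoff_null s -> sink s -> gsval G s = 0.
Proof. by move=> Hs /(Hs 0%N); rewrite /= eqxx mul1r. Qed.

Lemma payoff_null_closed (P : V -> Prop) :
  (forall x y, P x -> T x y != 0 -> P y) ->
  (forall s, P s -> sink s -> gsval G s = 0) ->
  forall x, P x -> payoff_null x.
Proof.
move=> Pclosed Psink x Px.
have Preach n y : D x n y != 0 -> P y.
  elim: n y => [|n IHn] y; first by move/indicator_neq0 <-.
  case: (pickP (fun v => (D x n v != 0) && (T v y != 0))) => [v /andP[Hv Hvy] _|Hnone].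
    exact: Pclosed (IHn v Hv) Hvy.
  rewrite /= big1 ?eqxx // => v _.
  by move: (Hnone v) => /negbT; rewrite negb_and !negbK => /orP[]/eqP->; rewrite ?mul0r ?mulr0.
move=> n s Hs; have [->|/Preach Ps] := eqVneq (D x n s) 0; first by rewrite mul0r.
by rewrite Psink ?mulr0.
Qed.

End MarkovChain.

Lemma best_response_null (R : realType) (V : finType) (G : ssg R V) (sg tu t : V -> V) x :
  stochastic_ssg G -> best_response G sg tu -> is_min_strategy G t ->
  payoff_null G sg t x -> payoff_null G sg tu x.
Proof.
move=> stochG [_ tu_best] Ht /(gvalue_eq0P stochG) Hx; apply/(gvalue_eq0P stochG)/eqP.
by rewrite eq_le gvalue_ge0 // andbT -Hx tu_best.
Qed.

Lemma sum_new_sinks (M : nmodType) (V : finType) (A : {set V * V}) (F : V -> M) u :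
  \sum_(e : {e : V * V | e \in A}) (if (val e).1 == u then F (val e).2 else 0)
  = \sum_(w | (u, w) \in A) F w.
Proof.
rewrite -(big_sub (mem A) (fun p => if p.1 == u then F p.2 else 0)) -big_mkcondr /=.
rewrite (reindex_onto (pair u) snd) => [|[a b] /andP[_ /= /eqP->] //].
by apply: eq_big => w /=; rewrite ?eqxx ?andbT.
Qed.

Section Transform.
Variables (R : realType) (V : finType) (G : ssg R V) (A : {set V * V}) (f : V * V -> R).
Local Notation G' := (transform G A f).

Definition proj_vertex (a : tvert A) : V :=
  match a with inl w => w | inr e => (val e).2 end.

Lemma transform_stochastic :
  stochastic_ssg G -> (forall e, e \in A -> 0 <= f e) -> stochastic_ssg G'.
Proof.
case=> prob_ge0 prob_sum1 sval_ge0 f_ge0; split.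
- case=> [u|e] // b /= Hu.
  by case: b => [w|e] /=; case: ifP => // _; apply: prob_ge0.
- case=> [u|e] //= Hu; rewrite big_sumType /= sum_new_sinks.
  rewrite (eq_bigr (fun w => if (u, w) \notin A then gprob G u w else 0)) => [|w _].
    by rewrite -big_mkcond addrC -(prob_sum1 u Hu) [RHS](bigID (fun w => (u, w) \in A)).
  by case: ifP.
- case=> [u|e] /= Hs; [exact: sval_ge0|exact: f_ge0 (valP e)].
Qed.

Lemma proj_lift_strategy rho u : proj_vertex (lift_strategy A rho (inl u)) = rho u.
Proof. by rewrite /lift_strategy; case: insubP => [e _ /= ->|]. Qed.

Lemma lift_strategy_min tu : is_min_strategy G tu -> is_min_strategy G' (lift_strategy A tu).
Proof.
move=> Htu [u|e] //= Hu; rewrite /lift_strategy.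
by case: insubP => [e _ -> //|/= HA]; rewrite Htu.
Qed.

Lemma trans_transform_lift sg tu a b :
  trans G' (lift_strategy A sg) (lift_strategy A tu) a b != 0 ->
  proj_vertex b = proj_vertex a \/ trans G sg tu (proj_vertex a) (proj_vertex b) != 0.
Proof.
case: a => [u|e]; rewrite /trans /=; last by move/indicator_neq0 <-; left.
case: (gkind G u) => [||Hb|].
- by move/indicator_neq0 <-; right; rewrite proj_lift_strategy eqxx oner_neq0.
- by move/indicator_neq0 <-; right; rewrite proj_lift_strategy eqxx oner_neq0.
- by right; case: b Hb => [w|e] /=; case: ifP => _; rewrite ?eqxx.
- by move/indicator_neq0 <-; left.
Qed.

Lemma trans_transform_proj sg t tu' u w :
  (gkind G u = VMin -> t u = proj_vertex (tu' (inl u))) ->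
  trans G sg t u w != 0 ->
  exists2 b, trans G' (lift_strategy A sg) tu' (inl u) b != 0 & proj_vertex b = w.
Proof.
move=> Ht; rewrite /trans /=; case Hu: (gkind G u).
- move/indicator_neq0 <-; exists (lift_strategy A sg (inl u)); first by rewrite eqxx oner_neq0.
  exact: proj_lift_strategy.
- by move/indicator_neq0 <-; rewrite Ht //; exists (tu' (inl u)); rewrite ?eqxx ?oner_neq0.
- move=> Huw; have [uwA|uwA] := boolP ((u, w) \in A).
    by exists (inr (Sub (u, w) uwA)); rewrite //= eqxx.
  by exists (inl w); rewrite //= (negPf uwA).
- by move/indicator_neq0 <-; exists (inl u); rewrite ?eqxx ?oner_neq0.
Qed.

Lemma payoff_null_lift sg tu x :
  stochastic_ssg G ->
  (forall e, e \in A -> payoff_null G sg tu e.2 -> f e = 0) ->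
  payoff_null G sg tu x ->
  payoff_null G' (lift_strategy A sg) (lift_strategy A tu) (inl x).
Proof.
move=> stochG Hf Hx.
apply: (payoff_null_closed (P := fun a => payoff_null G sg tu (proj_vertex a))) => //.
- move=> a b Na /trans_transform_lift[->//|].
  exact: payoff_null_trans.
- case=> [u|e] /= Nu Hu.
    exact: payoff_null_sink Nu Hu.
  exact: Hf (valP e) Nu.
Qed.

Definition merge_strategy sg tu (tu' : tvert A -> tvert A) (u : V) : V :=
  if `[< payoff_null G sg tu u >] then tu u else proj_vertex (tu' (inl u)).

Lemma merge_strategy_min sg tu tu' :
  (forall e, e \in A -> garc G e.1 e.2) ->
  is_min_strategy G tu -> is_min_strategy G' tu' ->
  is_min_strategy G (merge_strategy sg tu tu').
Proof.
move=> HA Htu Htu' u Hu; rewrite /merge_strategy; case: asboolP => _; first exact: Htu.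
move: (Htu' (inl u) Hu).
by case: (tu' (inl u)) => [w /andP[]|e /eqP <-] //; apply: HA (valP e).
Qed.

Lemma payoff_null_merge sg tu tu' x :
  stochastic_ssg G ->
  (forall e, e \in A -> 0 <= f e) ->
  (forall e, e \in A -> f e = 0 -> payoff_null G sg tu e.2) ->
  payoff_null G' (lift_strategy A sg) tu' (inl x) ->
  payoff_null G sg (merge_strategy sg tu tu') x.
Proof.
move=> stochG f_ge0 Hf Hx; have stochG' := transform_stochastic stochG f_ge0.
apply: (payoff_null_closed
  (P := fun u => payoff_null G sg tu u \/ payoff_null G' (lift_strategy A sg) tu' (inl u))).
- move=> u w Nu Huw; case: (asboolP (payoff_null G sg tu u)) => [Nu_tu|Nu_tu] in Huw *.
    have Huw_tu : trans G sg tu u w != 0 by rewrite /trans /merge_strategy asboolT in Huw.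
    by left; exact: payoff_null_trans Huw_tu.
  have {Nu}Nu : payoff_null G' (lift_strategy A sg) tu' (inl u) by case: Nu.
  have merge_u : gkind G u = VMin -> merge_strategy sg tu tu' u = proj_vertex (tu' (inl u)).
    by rewrite /merge_strategy asboolF.
  have [b Hb <-] := trans_transform_proj merge_u Huw.
  case: b Hb => [v|e] /(payoff_null_trans stochG' Nu) Nb /=; first by right.
  by left; apply: Hf (valP e) (payoff_null_sink Nb _).
- by move=> s [] /payoff_null_sink.
- by right.
Qed.

End Transform.

Theorem lemma11 (R : realType) (V : finType) (G : ssg R V) (A : {set V * V})
    (sigma tau : V -> V) (tau' : tvert A -> tvert A) :
  is_ssg G ->
  (forall e, e \in A -> garc G e.1 e.2) ->
  is_max_strategy G sigma ->
  best_response G sigma tau ->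
  best_response (transform G A (fun e => gvalue G sigma tau e.2))
                (lift_strategy A sigma) tau' ->
  forall x : V,
    gvalue G sigma tau x = 0 <->
    gvalue (transform G A (fun e => gvalue G sigma tau e.2))
          (lift_strategy A sigma) tau' (inl x) = 0.
Proof.
move=> HG HA _ brG brG' x.
have stochG := is_ssg_stochastic HG.
have f_ge0 (e : V * V) : e \in A -> 0 <= gvalue G sigma tau e.2.
  by move=> _; apply: gvalue_ge0.
have stochG' := transform_stochastic stochG f_ge0.
rewrite (gvalue_eq0P stochG) (gvalue_eq0P stochG'); split => Nx.
- have f_eq0 e : e \in A -> payoff_null G sigma tau e.2 -> gvalue G sigma tau e.2 = 0.
    by move=> _ /(gvalue_eq0P stochG).
  apply: (best_response_null stochG' brG' _ (payoff_null_lift stochG f_eq0 Nx)).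
  exact: lift_strategy_min brG.1.
- have f_eq0 e : e \in A -> gvalue G sigma tau e.2 = 0 -> payoff_null G sigma tau e.2.
    by move=> _ /(gvalue_eq0P stochG).
  apply: (best_response_null stochG brG _ (payoff_null_merge stochG f_ge0 f_eq0 Nx)).
  exact: merge_strategy_min HA brG.1 brG'.1.
Qed.
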